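(* Consider a CMILS instance and let $(x,y)$ satisfy $x_{s,i}\in[0,1]$ for all $i\in[N]$, $s\in[r_i]$, $\sum_{s\in[r_i]}x_{s,i}=1$ for every $i\in[N]$, and $y\in[0,1]^T$. For every interval $(a,b]$ over $[T]$ let $R_{a,b}:=\sum_{i\in[N]:\ r_i\in(a,b]}\max\{1-\frac52x_{[a],i},0\}d_i$. Let $(a,b]$ be an interval with $R_{a,b}>0$, let $I=\{i\in[N]: r_i\in(a,b],\ x_{[a],i}<\frac25\}$, and let $(S_1,S_2)$ be any partition of $(a,b]$ into two parts with $C(S_1)<R_{a,b}$. If $$C(S_1)+\sum_{s\in S_2}\min\{C_s,\,d(I)-C(S_1)\}\,y_s+\sum_{i\in I}x_{[T]\setminus(S_1\cup S_2),i}\,d_i\ \ge\ d(I),$$ then either $$\sum_{s\in S_2}\min\{C_s,\,R_{a,b}-C(S_1)\}\,y_s\ \ge\ R_{a,b}-C(S_1)\quad\text{or}\quad\sum_{s\in S_2:\ C_s\ge R_{a,b}-C(S_1)}y_s\ \ge\ \tfrac35.$$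
   Context: CMILS instance: periods $[T]$, items $[N]$; item $i$ has demand $d_i>0$ due by time $r_i\in[T]$; period $s$ has capacity $C_s>0$ (and ordering cost $K_s>0$); holding costs are irrelevant here. Notation: $x_{s,i}=0$ for $s>r_i$; $x_{S,i}=\sum_{s\in S}x_{s,i}$ for $S\subseteq[T]$; $[a]=\{1,\dots,a\}$ ($[0]=\emptyset$); $(a,b]=\{a+1,\dots,b\}$ and an interval over $[T]$ is $(a,b]$ with integers $0\le a<b\le T$; $C(S)=\sum_{s\in S}C_s$; $d(I)=\sum_{i\in I}d_i$. *)

From HB Require Import structures.
From mathcomp Require Import all_boot all_order all_algebra.
Set Implicit Arguments. Unset Strict Implicit. Unset Printing Implicit Defensive.
Import Order.TTheory GRing.Theory Num.Theory.
Local Open Scope ring_scope.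

(* Periods are the naturals 1..T; items are 'I_N.
   A subset S of periods is a boolean predicate on nat (only s in [T] matter). *)

Definition xS (R : realFieldType) (T : nat) (x : nat -> R) (S : pred nat) : R :=
  \sum_(1 <= s < T.+1 | S s) x s.

Definition xpre (R : realFieldType) (x : nat -> R) (a : nat) : R :=
  \sum_(1 <= s < a.+1) x s.

Definition capS (R : realFieldType) (T : nat) (C : nat -> R) (S : pred nat) : R :=
  \sum_(1 <= s < T.+1 | S s) C s.

Definition dem (R : realFieldType) (N : nat) (d : 'I_N -> R) (I : pred 'I_N) : R :=
  \sum_(i < N | I i) d i.

Definition Rab (R : realFieldType) (N : nat) (r : 'I_N -> nat) (d : 'I_N -> R)
  (x : nat -> 'I_N -> R) (a b : nat) : R :=
  \sum_(i < N | (a < r i <= b)%N)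
     Num.max (1 - (5%:R / 2%:R) * xpre (fun s => x s i) a) 0 * d i.

From HB Require Import structures.
From mathcomp Require Import all_boot all_order all_algebra.
From mathcomp Require Import ring lra.
Set Implicit Arguments.
Unset Strict Implicit.
Unset Printing Implicit Defensive.

Import Order.TTheory GRing.Theory Num.Theory.
Local Open Scope ring_scope.

(* Write X := sum_{i in I} x_{[a],i} d_i.  The items of (a,b] outside I contribute nothing to
   R_{a,b}, so R_{a,b} = d(I) - 5/2 X; and for i in I the periods outside (a,b] carry exactly
   x_{[a],i}, so the hypothesis reads C(S_1) + sum_{S_2} min{C_s, d(I) - C(S_1)} y_s + X >= d(I).
   Splitting min{C_s, d(I) - C(S_1)} <= min{C_s, R - C(S_1)} + 5/2 X [C_s >= R - C(S_1)] gives
   sum_{S_2} min{C_s, R - C(S_1)} y_s >= R - C(S_1) + X (3/2 - 5/2 Y), where Y is the y-mass of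
   the large periods of S_2; hence Y >= 3/5 or the first alternative holds. *)

Lemma big_max0_mul (R : realDomainType) (J : finType) (P : pred J) (f d : J -> R) :
  \sum_(j | P j) Num.max (f j) 0 * d j = \sum_(j | P j && (0 < f j)) f j * d j.
Proof.
rewrite (bigID (fun j => 0 < f j)) /= [X in _ + X]big1 ?addr0.
  by apply: eq_bigr => j /andP[_ /ltW f_ge0]; rewrite max_l.
by move=> j /andP[_]; rewrite -leNgt => f_le0; rewrite max_r // mul0r.
Qed.

Lemma Rab_low_items (R : realFieldType) (N : nat) (r : 'I_N -> nat) (d : 'I_N -> R)
    (x : nat -> 'I_N -> R) (a b : nat) (I : pred 'I_N) :
  (forall i, I i = (a < r i <= b)%N && (xpre (fun s => x s i) a < 2%:R / 5%:R)) ->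
  Rab r d x a b
    = dem d I - 5%:R / 2%:R * \sum_(i < N | I i) xpre (fun s => x s i) a * d i.
Proof.
move=> hI; rewrite /Rab big_max0_mul /dem mulr_sumr -sumrB.
apply: eq_big => [i | i _]; last by ring.
rewrite hI; congr (_ && _).
by apply/idP/idP => ?; lra.
Qed.

Lemma xpre_ge0 (R : realFieldType) (u : nat -> R) (a : nat) :
  (forall s, (1 <= s <= a)%N -> 0 <= u s) -> 0 <= xpre u a.
Proof.
move=> u_ge0; rewrite /xpre big_nat_cond.
by apply: sumr_ge0 => s /andP[/andP[s_ge1 s_le_a] _]; apply: u_ge0; rewrite s_ge1.
Qed.

Lemma xS_notin_interval (R : realFieldType) (T : nat) (u : nat -> R) (P : pred nat)
    (a b : nat) :
  (a <= T)%N -> (forall s, P s = ~~ (a < s <= b)%N) ->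
  (forall s, (b < s)%N -> u s = 0) ->
  xS T u P = xpre u a.
Proof.
move=> a_le_T hP u_b.
rewrite /xS (big_cat_nat _ (a_le_T : a.+1 <= T.+1)%N) //= [X in _ + X]big1_seq ?addr0.
  rewrite /xpre big_nat_cond [RHS]big_nat_cond; apply: eq_bigl => s.
  rewrite hP; case: (boolP (1 <= s < a.+1)%N) => //= /andP[_ s_le_a].
  by rewrite ltnNge -ltnS s_le_a.
move=> s /andP[]; rewrite hP mem_index_iota => out_ab /andP[a_s _]; apply: u_b.
by move: out_ab; rewrite a_s /= -ltnNge.
Qed.

Lemma min_le_min_add (R : realDomainType) (c e f : R) :
  e <= f -> Num.min c f <= Num.min c e + (if e <= c then f - e else 0).
Proof.
move=> ef; case: (leP e c) => _; last by rewrite addr0 ge_min lexx.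
by rewrite addrC subrK ge_min lexx orbT.
Qed.

Lemma sum_min_split (R : realDomainType) (m n : nat) (P : pred nat) (c y : nat -> R)
    (e f : R) :
  e <= f -> (forall s, P s -> 0 <= y s) ->
  \sum_(m <= s < n | P s) Num.min (c s) f * y s
    <= \sum_(m <= s < n | P s) Num.min (c s) e * y s
       + (f - e) * \sum_(m <= s < n | P s && (e <= c s)) y s.
Proof.
move=> ef y_ge0; rewrite big_mkcondr mulr_sumr -big_split /=.
apply: ler_sum => s Ps.
have := ler_wpM2r (y_ge0 s Ps) (min_le_min_add (c s) ef).
by rewrite mulrDl; case: (e <= c s); rewrite ?mulr0 ?mul0r.
Qed.

Theorem lemma2 (R : realFieldType) (T N : nat)
  (r : 'I_N -> nat) (d : 'I_N -> R) (C : nat -> R)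
  (x : nat -> 'I_N -> R) (y : nat -> R)
  (* CMILS instance *)
  (hr : forall i, (1 <= r i <= T)%N)
  (hd : forall i, 0 < d i)
  (hC : forall s, (1 <= s <= T)%N -> 0 < C s)
  (* convention x_{s,i} = 0 for s > r_i *)
  (hx0 : forall s i, (r i < s)%N -> x s i = 0)
  (* the point (x, y) *)
  (hx01 : forall i s, (1 <= s <= r i)%N -> 0 <= x s i <= 1)
  (hxsum : forall i, \sum_(1 <= s < (r i).+1) x s i = 1)
  (hy : forall s, (1 <= s <= T)%N -> 0 <= y s <= 1)
  (* the interval (a,b] *)
  (a b : nat) (hab : (a < b <= T)%N)
  (hR : 0 < Rab r d x a b)
  (* the partition (S1, S2) of (a,b] *)
  (S1 S2 : pred nat)
  (hpart : forall s, (a < s <= b)%N = S1 s || S2 s)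
  (hdisj : forall s, ~~ (S1 s && S2 s))
  (hS1 : capS T C S1 < Rab r d x a b) :
  let I : pred 'I_N := fun i =>
      (a < r i <= b)%N && (xpre (fun s => x s i) a < 2%:R / 5%:R) in
  let Rv := Rab r d x a b in
  let CS1 := capS T C S1 in
  capS T C S1
    + \sum_(1 <= s < T.+1 | S2 s) Num.min (C s) (dem d I - CS1) * y s
    + \sum_(i < N | I i)
        xS T (fun s => x s i) (fun s => ~~ S1 s && ~~ S2 s) * d i
    >= dem d I ->
  (\sum_(1 <= s < T.+1 | S2 s) Num.min (C s) (Rv - CS1) * y s >= Rv - CS1)
  \/ (\sum_(1 <= s < T.+1 | S2 s && (C s >= Rv - CS1)) y s >= 3%:R / 5%:R).
Proof.
move=> I Rv CS1.
set X := \sum_(i < N | I i) xpre (fun s => x s i) a * d i.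
have [a_lt_b b_le_T] := andP hab.
have hRv : Rv = dem d I - 5%:R / 2%:R * X by apply: Rab_low_items.
have -> : \sum_(i < N | I i) xS T (fun s => x s i) (fun s => ~~ S1 s && ~~ S2 s) * d i = X.
  apply: eq_bigr => i /andP[/andP[a_r r_b] _]; congr (_ * _).
  apply: (xS_notin_interval (a := a) (b := b)) => [| s | s b_s].
  - exact: leq_trans (ltnW a_lt_b) b_le_T.
  - by rewrite hpart negb_or.
  - by apply: hx0; exact: leq_ltn_trans r_b b_s.
have X_ge0 : 0 <= X.
  apply: sumr_ge0 => i /andP[/andP[a_r _] _]; apply: mulr_ge0 (ltW (hd i)).
  apply: xpre_ge0 => s /andP[s_ge1 s_le_a].
  have s_le_r : (1 <= s <= r i)%N by rewrite s_ge1 (leq_trans s_le_a (ltnW a_r)).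
  by case/andP: (hx01 i s s_le_r).
have y_ge0 s : S2 s -> 0 <= y s.
  move=> S2s; have /andP[a_s s_b] : (a < s <= b)%N by rewrite hpart S2s orbT.
  have s_in_T : (1 <= s <= T)%N by rewrite (leq_trans _ a_s) //= (leq_trans s_b b_le_T).
  by case/andP: (hy s s_in_T).
have hRvD : Rv - CS1 <= dem d I - CS1 by rewrite hRv; lra.
have := sum_min_split 1 T.+1 C hRvD y_ge0.
set Y := \sum_(1 <= s < T.+1 | S2 s && (Rv - CS1 <= C s)) y s.
move=> split_min; rewrite -/CS1 => covered.
case: (lerP (3%:R / 5%:R) Y) => Y_small; [by right | left].
have gap : dem d I - CS1 - (Rv - CS1) = 5%:R / 2%:R * X by rewrite hRv; ring.
have : 0 <= X * (3%:R / 5%:R - Y) by rewrite mulr_ge0 // subr_ge0 ltW.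
rewrite gap in split_min; lra.
Qed.
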